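(* Let $G$ be a topological group, $\mathcal{Y}$ a Hausdorff locally convex space, and $\pi\colon G\to\mathrm{End}(\mathcal{Y})$ a representation such that the action $(g,y)\mapsto\pi(g)y$, $G\times\mathcal{Y}\to\mathcal{Y}$, is continuous and there is a neighborhood $V$ of $\mathbf{1}\in G$ with $\pi(V)$ equicontinuous on $\mathcal{Y}$. Then $\mathcal{D}^1_{d\pi}=\mathcal{D}^{1,\mathrm{lin}}_{d\pi}$. If moreover (1) $\mathfrak{L}(G)$ is endowed with a Baire topology that is stronger than the compact-open topology; (2) for every $X_1,X_2\in\mathfrak{L}(G)$ there exists $X\in\mathfrak{L}(G)$ with $X=X_1+X_2$ (in the sense below), and $\mathfrak{L}(G)$, with this addition and scalar multiplication $(tX)(s)=X(ts)$, is a topological vector space for the topology in (1); (3) $\mathcal{Y}$ is metrizable; then also $\mathcal{D}^1_{d\pi}=\mathcal{D}^{1,\mathrm{cont}}_{d\pi}$, where continuity in the definition of $\mathcal{D}^{1,\mathrm{cont}}_{d\pi}$ refers to the topology on $\mathfrak{L}(G)$ from (1).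
   Context: All topological groups are Hausdorff; $\mathrm{End}(\mathcal{Y})$ is the algebra of continuous linear operators on $\mathcal{Y}$. $\mathfrak{L}(G)$ is the set of continuous homomorphisms $(\mathbb{R},+)\to G$; the compact-open topology on it is uniform convergence on compact subsets of $\mathbb{R}$. For $X,X_1,X_2\in\mathfrak{L}(G)$ one writes $X=X_1+X_2$ if $X(t)=\lim_{n\to\infty}(X_1(t/n)X_2(t/n))^n$ for all $t\in\mathbb{R}$, uniformly on compact subsets of $\mathbb{R}$. For $X\in\mathfrak{L}(G)$, $d\pi(X)$ is the infinitesimal generator of $t\mapsto\pi(X(t))$, with domain $\mathcal{D}(d\pi(X))$ the set of $y$ for which $d\pi(X)y:=\lim_{t\to0}\frac{\pi(X(t))y-y}{t}$ exists. Define $\mathcal{D}^1_{d\pi}=\bigcap_{X\in\mathfrak{L}(G)}\mathcal{D}(d\pi(X))$; $\mathcal{D}^{1,\mathrm{cont}}_{d\pi}=\{y\in\mathcal{D}^1_{d\pi}\mid X\mapsto d\pi(X)y \text{ is continuous } \mathfrak{L}(G)\to\mathcal{Y}\}$; $\mathcal{D}^{1,\mathrm{lin}}_{d\pi}=\{y\in\mathcal{D}^1_{d\pi}\mid d\pi(X)y=d\pi(X_1)y+d\pi(X_2)y \text{ whenever } X,X_1,X_2\in\mathfrak{L}(G),\ X=X_1+X_2\}$. *)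

From HB Require Import structures.
From mathcomp Require Import all_boot all_order all_algebra.
From mathcomp Require Import all_classical all_reals all_analysis.
Set Implicit Arguments. Unset Strict Implicit. Unset Printing Implicit Defensive.
Import Order.TTheory GRing.Theory Num.Theory numFieldNormedType.Exports.
Local Open Scope classical_set_scope.
Local Open Scope ring_scope.

Section defs.
Variable R : realType.

Definition topological_group (G : topologicalType) (mul : G -> G -> G)
  (inv : G -> G) (one : G) : Prop :=
  (associative mul /\ left_id one mul /\ right_id one mul /\
   (forall g, mul (inv g) g = one) /\ (forall g, mul g (inv g) = one)) /\
  (continuous (fun p : G * G => mul p.1 p.2) /\ continuous inv /\
   hausdorff_space G).

Fixpoint gpow (G : Type) (mul : G -> G -> G) (one : G) (x : G) (n : nat) : G :=
  if n is n'.+1 then mul x (gpow mul one x n') else one.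

Definition one_param (G : topologicalType) (mul : G -> G -> G) (X : R -> G) : Prop :=
  continuous X /\ forall s t, X (s + t) = mul (X s) (X t).

Definition lie_sum (G : topologicalType) (mul : G -> G -> G) (inv : G -> G) (one : G)
  (X X1 X2 : R -> G) : Prop :=
  forall K : set R, compact K -> forall U : set G, nbhs one U ->
  \forall n \near \oo, forall t, K t ->
     U (mul (inv (X t)) (gpow mul one (mul (X1 (t / n%:R)) (X2 (t / n%:R))) n)).

Definition has_gen (G : topologicalType) (Y : tvsType R) (pi : G -> Y -> Y)
  (X : R -> G) (y : Y) : Prop :=
  exists v : Y, (fun t : R => t^-1 *: (pi (X t) y - y)) @ 0^' --> v.

Definition dpi (G : topologicalType) (Y : tvsType R) (pi : G -> Y -> Y)
  (X : R -> G) (y : Y) : Y :=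
  xget 0 (fun v : Y => (fun t : R => t^-1 *: (pi (X t) y - y)) @ 0^' --> v).

Definition is_representation (G : topologicalType) (mul : G -> G -> G) (one : G)
  (Y : tvsType R) (pi : G -> Y -> Y) : Prop :=
  (forall g, (forall (a : R) (x z : Y), pi g (a *: x + z) = a *: pi g x + pi g z)
             /\ continuous (pi g)) /\
  (forall y, pi one y = y) /\
  (forall g h y, pi (mul g h) y = pi g (pi h y)).

Definition equicontinuous_ops (Y : tvsType R) (I : Type) (V : set I)
  (T : I -> Y -> Y) : Prop :=
  forall W : set Y, nbhs (0 : Y) W ->
    exists U : set Y, nbhs (0 : Y) U /\ forall i, V i -> forall x, U x -> W (T i x).

Definition D1 (G : topologicalType) (mul : G -> G -> G) (Y : tvsType R)
  (pi : G -> Y -> Y) : set Y :=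
  [set y | forall X : R -> G, one_param mul X -> has_gen pi X y].

Definition D1lin (G : topologicalType) (mul : G -> G -> G) (inv : G -> G) (one : G)
  (Y : tvsType R) (pi : G -> Y -> Y) : set Y :=
  [set y | D1 mul pi y /\
    forall X X1 X2 : R -> G, one_param mul X -> one_param mul X1 -> one_param mul X2 ->
      lie_sum mul inv one X X1 X2 -> dpi pi X y = dpi pi X1 y + dpi pi X2 y].

(* [L] with [iota] is a copy of the set L(G), carrying a topology *)
Definition D1cont (G : topologicalType) (mul : G -> G -> G) (Y : tvsType R)
  (pi : G -> Y -> Y) (L : topologicalType) (iota : L -> R -> G) : set Y :=
  [set y | D1 mul pi y /\ continuous (fun a : L => dpi pi (iota a) y)].

Definition metrizable_space (T : topologicalType) : Prop :=
  exists d : T -> T -> R,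
    (forall x y, d x y = 0 <-> x = y) /\ (forall x y, d x y = d y x) /\
    (forall x y z, d x z <= d x y + d y z) /\
    (forall (x : T) (A : set T), nbhs x A <-> exists2 e : R, 0 < e & [set y | d x y < e] `<=` A).

End defs.

Definition baire_space (T : topologicalType) : Prop :=
  forall F : nat -> set T, (forall n, open (F n) /\ dense (F n)) ->
    dense (\bigcap_n F n).

From HB Require Import structures.
From mathcomp Require Import all_boot all_order all_algebra.
From mathcomp Require Import all_classical all_reals all_analysis.
Import Order.TTheory GRing.Theory Num.Theory numFieldNormedType.Exports.
Local Open Scope classical_set_scope.
Local Open Scope ring_scope.

(* Additivity: for small t > 0 write h = t/n and g = X1(h) X2(h).  Telescoping gives
   t^-1 (pi(g^n) y - y) = n^-1 sum_(k<n) pi(g^k) z  with  z = h^-1 (pi(g) y - y)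
   close to dpi(X1) y + dpi(X2) y.  Applied on [-1, 1], the Lie-sum hypothesis keeps
   every g^k (k < n) near 1, so by joint continuity of the action each pi(g^k) z lies
   in a convex neighbourhood of that sum, hence so does their mean, while g^n is
   close to X(t) for n large.
   Continuity: X |-> dpi(X) y is the pointwise limit of the continuous maps
   X |-> (m+1) (pi(X(1/(m+1))) y - y) and is additive; by the Baire category theorem
   the Cauchy condition holds uniformly on some open set, which gives continuity at 0
   and hence everywhere. *)

Lemma continuous2_nbhs {A B C : topologicalType} {h : A -> B -> C} {a b W} :
  {for (a, b), continuous (fun p : A * B => h p.1 p.2)} -> nbhs (h a b) W ->
  exists2 U, nbhs a U & exists2 V, nbhs b V & forall u v, U u -> V v -> W (h u v).
Proof.
move=> hc /hc [[U V] /= [nU nV] UV].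
by exists U => //; exists V => // u v Uu Vv; apply: (UV (u, v)).
Qed.

Lemma compact_open_eval_continuous {L U V : topologicalType}
    (f : L -> {compact-open, U -> V}) (s : U) :
  continuous f -> continuous (fun a => f a s).
Proof.
move=> fc a A; rewrite nbhsE; case=> O [oO Oa] OA.
have sO : [set f a x | x in [set s]] `<=` O by move=> _ [x -> <-].
have /(compact_open_cvgP _ _) /(_ [set s] O (@compact_set1 _ s) oO sO) := fc a.
rewrite nbhs_filterE /fmap /=; apply: filterS => b Ob.
by apply: OA; apply: Ob; exists s.
Qed.

Lemma baire_closed_cover {T : topologicalType} (F : nat -> set T) :
  baire_space T -> [set: T] !=set0 ->
  (forall N, closed (F N)) -> (forall x, exists N, F N x) ->
  exists N, exists2 O : set T, open O /\ O !=set0 & O `<=` F N.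
Proof.
move=> bT T0 Fcl Fcov; apply: contrapT => noint.
have dense_compl N : open (~` F N) /\ dense (~` F N).
  split; first exact: closed_openC.
  move=> O O0 oO; apply: contrapT => OF; apply: noint; exists N, O => // x Ox.
  by apply: contrapT => Fx; apply: OF; exists x.
have [x [_ Fx]] := bT _ dense_compl setT T0 openT.
by have [N FNx] := Fcov x; exact: Fx N I FNx.
Qed.

Lemma cvg_invnS_dnbhs0 {R : realType} :
  (fun N : nat => N.+1%:R^-1 : R) @ \oo --> (0 : R)^'.
Proof.
move=> A /nbhs_ballP [e e0 eA]; apply: filterS (near_infty_natSinv_lt (PosNum e0)).
move=> N Ne; apply: eA; last by rewrite invr_eq0 pnatr_eq0.
by rewrite /ball /= sub0r normrN gtr0_norm.
Qed.

Lemma cvg0_ball {R : realType} {T : topologicalType} {f : R -> T} {x : T} {A : set T} :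
  f @ 0 --> x -> nbhs x A -> exists2 e : R, 0 < e & forall s, `|s| < e -> A (f s).
Proof.
move=> fx /fx /nbhs_ballP [e e0 eA]; exists e => // s se; apply: eA.
by rewrite /ball /= sub0r normrN.
Qed.

Lemma dcvg0_ball {R : realType} {T : topologicalType} {f : R -> T} {x : T} {A : set T} :
  f @ 0^' --> x -> nbhs x A ->
  exists2 e : R, 0 < e & forall s, s != 0 -> `|s| < e -> A (f s).
Proof.
move=> fx /fx /nbhs_ballP [e e0 eA]; exists e => // s s0 se; apply: eA => //.
by rewrite /ball /= sub0r normrN.
Qed.

Section topological_zmodule.
Context {M : topologicalZmodType}.

Lemma cvgD_top {T} {F : set_system T} {FF : Filter F} {f g : T -> M} {a b : M} :
  f @ F --> a -> g @ F --> b -> (fun x => f x + g x) @ F --> a + b.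
Proof. by move=> fa gb; apply: continuous2_cvg => //; exact: (add_continuous (a, b)). Qed.

Lemma cvgB_top {T} {F : set_system T} {FF : Filter F} {f g : T -> M} {a b : M} :
  f @ F --> a -> g @ F --> b -> (fun x => f x - g x) @ F --> a - b.
Proof.
move=> fa gb; apply: (@continuous2_cvg _ _ _ _ _ _ f g (fun u v => u - v)) => //.
exact: (@sub_continuous M (a, b)).
Qed.

Lemma nbhs_to0 {x : M} {W : set M} : nbhs x W -> nbhs 0 [set z | W (x + z)].
Proof.
have : (fun z : M => x + z) @ (0 : M) --> x + 0 by apply: cvgD_top; [exact: cvg_cst|exact: cvg_id].
by rewrite addr0 => xz /xz.
Qed.

Lemma nbhs_from0 {x : M} {W : set M} : nbhs 0 W -> nbhs x [set z | W (z - x)].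
Proof.
have : (fun z : M => z - x) @ x --> x - x by apply: cvgB_top; [exact: cvg_id|exact: cvg_cst].
by rewrite subrr => zx /zx.
Qed.

Lemma nbhs0_add_split {W : set M} : nbhs 0 W ->
  exists2 E : set M, nbhs 0 E & forall a b, E a -> E b -> W (a + b).
Proof.
rewrite -{1}[0 : M]addr0 => /(continuous2_nbhs (add_continuous (0, 0))).
move=> [U1 nU1 [U2 nU2 U12]]; exists (U1 `&` U2); first exact: filterI.
by move=> a b [? _] [_ ?]; exact: U12.
Qed.

End topological_zmodule.

Lemma additive_continuous {L M : topologicalZmodType} (f : L -> M) :
  {morph f : a b / a + b} ->
  (forall W, nbhs 0 W -> exists2 U, nbhs 0 U & forall c, U c -> W (f c)) ->
  continuous f.
Proof.
move=> fD f0 a A /nbhs_to0 /f0 [U nU UA].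
rewrite nbhs_filterE /fmap /=.
by apply: filterS (nbhs_from0 (x := a) nU) => b /UA /=; rewrite -fD addrC subrK.
Qed.

Lemma cvgZ_top {R : realType} {M : topologicalLmodType R} {T} {F : set_system T}
    {FF : Filter F} {f : T -> R} {g : T -> M} {a : R} {b : M} :
  f @ F --> a -> g @ F --> b -> (fun x => f x *: g x) @ F --> a *: b.
Proof.
move=> fa gb; apply: (@continuous2_cvg _ R^o) => //.
exact: (scale_continuous (a, b)).
Qed.

Section locally_convex.
Context {R : realType} {Y : tvsType R}.

Lemma convex_set_mean {C : set Y} : convex_set (C : set (convex_lmodType Y)) ->
  forall n (z : nat -> Y), (0 < n)%N -> (forall k, (k < n)%N -> C (z k)) ->
  C (n%:R^-1 *: \sum_(k < n) z k).
Proof.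
move=> cC; elim=> [//|[|n] IH] z _ Cz.
  by rewrite big_ord1 invr1 scale1r; apply: Cz.
have p0 : 0 <= (n.+1%:R / n.+2%:R : R) by rewrite divr_ge0.
have p1 : (n.+1%:R / n.+2%:R : R) <= 1.
  by rewrite ler_pdivrMr ?mul1r ?ler_nat ?ltr0n.
have Cmean : C (n.+1%:R^-1 *: \sum_(k < n.+1) z k).
  by apply: IH => // k kn; apply: Cz; exact: ltnW.
have -> : n.+2%:R^-1 *: \sum_(k < n.+2) z k =
    n.+1%:R / n.+2%:R *: (n.+1%:R^-1 *: \sum_(k < n.+1) z k) +
    (1 - n.+1%:R / n.+2%:R) *: z n.+1.
  rewrite big_ord_recr /= scalerDr scalerA; congr (_ *: _ + _ *: _).
    by rewrite mulrAC mulfV ?mul1r // pnatr_eq0.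
  apply: (@mulfI _ n.+2%:R); first by rewrite pnatr_eq0.
  by rewrite mulrBr mulr1 mulrCA !divff ?pnatr_eq0 // mulr1 -natrB // subSnn.
have := cC (n.+1%:R^-1 *: \sum_(k < n.+1) z k : convex_lmodType Y) (z n.+1) (Itv01 p0 p1).
by rewrite !inE => /(_ Cmean (Cz _ (ltnSn _))).
Qed.

Lemma nbhs0_convex_sub {E : set Y} : nbhs 0 E ->
  exists C : set Y, [/\ nbhs 0 C, convex_set (C : set (convex_lmodType Y)) & C `<=` E].
Proof.
move=> nE; have [B Bconvex [Bopen Bbasis]] := @locally_convex R Y.
have [C [BC C0] CE] := Bbasis 0 E nE.
exists C; split => //; last by apply: Bconvex; rewrite inE.
by apply: open_nbhs_nbhs; split => //; exact: Bopen.
Qed.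

Lemma closed_tail_cauchy {L : topologicalType} {g : nat -> L -> Y} {D : set Y} N :
  (forall m, continuous (g m)) -> closed D ->
  closed [set a | forall m k, (N <= m)%N -> (N <= k)%N -> D (g m a - g k a)].
Proof.
move=> gc cD.
have -> : [set a | forall m k, (N <= m)%N -> (N <= k)%N -> D (g m a - g k a)] =
    \bigcap_(p in [set p : nat * nat | (N <= p.1)%N /\ (N <= p.2)%N])
      ((fun a => g p.1 a - g p.2 a) @^-1` D).
  apply/seteqP; split => a /= Da; first by move=> [m k] /= [Nm Nk]; exact: Da.
  by move=> m k Nm Nk; exact: (Da (m, k)).
apply: closed_bigI => p _; apply: preimage_closed => // a _.
by apply: cvgB_top; exact: gc.
Qed.

Lemma baire_additive_limit_continuous (L : topologicalZmodType) (f : L -> Y)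
    (g : nat -> L -> Y) :
  baire_space L -> (forall m, continuous (g m)) ->
  (forall a, g m a @[m --> \oo] --> f a) -> {morph f : a b / a + b} ->
  continuous f.
Proof.
move=> bL gc gf fD; apply: additive_continuous => // W.
move=> /nbhs0_add_split [E1 /[dup] nE1 /nbhs0_add_split [E2 nE2 E2W] E1W].
have [D0 nD0 D0E] := uniform_regular (filterI nE1 nE2).
set D := closure D0.
have cD : closed D by exact: closed_closure.
have nD : nbhs 0 D by apply: filterS nD0; exact: subset_closure.
pose F N := [set a | forall m k, (N <= m)%N -> (N <= k)%N -> D (g m a - g k a)].
have Fcover a : exists N, F N a.
  have nD' : nbhs (f a - f a) D by rewrite subrr.
  have [U nU [V nV UV]] :=
    continuous2_nbhs (h := fun u v : Y => u - v) (@sub_continuous Y (f a, f a)) nD'.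
  have [N _ gUV] := gf a _ (filterI nU nV).
  by exists N => m k Nm Nk; apply: UV; [exact: (gUV m Nm).1 | exact: (gUV k Nk).2].
have [N [Ob [oOb [a0 Oba0]] ObF]] :=
  baire_closed_cover _ bL (ex_intro _ 0 I) (fun N => closed_tail_cauchy N gc cD) Fcover.
have gN_f b : Ob b -> D (g N b - f b) /\ D (f b - g N b).
  move=> /ObF Fb; split.
    apply: (closed_cvg _ cD _ _ (cvgB_top (cvg_cst (g N b)) (gf b))).
    by near=> k; apply: Fb => //; near: k; exact: nbhs_infty_ge.
  apply: (closed_cvg _ cD _ _ (cvgB_top (gf b) (cvg_cst (g N b)))).
  by near=> k; apply: Fb => //; near: k; exact: nbhs_infty_ge.
have ngN : nbhs a0 [set b | D (g N b - g N a0)].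
  have : g N b - g N a0 @[b --> a0] --> g N a0 - g N a0.
    by apply: cvgB_top; [exact: gc | exact: cvg_cst].
  by rewrite subrr => /(_ D nD).
exists ([set c | Ob (a0 + c)] `&` [set c | D (g N (a0 + c) - g N a0)]).
  apply: filterI; [apply: (@nbhs_to0 L a0 Ob) | exact: (@nbhs_to0 L a0 _ ngN)].
  by apply: open_nbhs_nbhs.
move=> c [Obc Dc].
have -> : f c = (f (a0 + c) - g N (a0 + c)) + (g N (a0 + c) - g N a0) + (g N a0 - f a0).
  by rewrite fD !addrA subrK subrK addrAC subrr add0r.
have [DE1 DE2] : D `<=` E1 /\ D `<=` E2 by split=> x /D0E [].
apply: E1W; first apply: E2W.
- exact: DE2 (gN_f _ Obc).2.
- exact: DE2 Dc.
- exact: DE1 (gN_f _ Oba0).1.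
Unshelve. all: by end_near.
Qed.

End locally_convex.

Definition diff_quot {R : realType} {G : Type} {Y : tvsType R} (pi : G -> Y -> Y)
  (X : R -> G) (y : Y) (t : R) := t^-1 *: (pi (X t) y - y).

Section representation.
Context {R : realType} {G : topologicalType} {mul : G -> G -> G} {inv : G -> G}
  {one : G} {Y : tvsType R} { pi : G -> Y -> Y }.
Hypothesis Gtop : topological_group mul inv one.
Hypothesis pi_rep : is_representation mul one pi.
Hypothesis pi_cont : continuous (fun p : G * Y => pi p.1 p.2).

Let mulA : associative mul. Proof. by case: Gtop => [[]]. Qed.
Let mul1g : left_id one mul. Proof. by case: Gtop => [[_ []]]. Qed.
Let mulg1 : right_id one mul. Proof. by case: Gtop => [[_ [_ []]]]. Qed.
Let mulVg g : mul (inv g) g = one. Proof. by case: Gtop => [[_ [_ [_ []]]]]. Qed.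
Let mulgV g : mul g (inv g) = one. Proof. by case: Gtop => [[_ [_ [_ []]]]]. Qed.
Let mul_cont : continuous (fun p : G * G => mul p.1 p.2).
Proof. by case: Gtop => _ []. Qed.

Let mulKg a b : mul a (mul (inv a) b) = b.
Proof. by rewrite mulA mulgV mul1g. Qed.

Let pi_lin g a x z : pi g (a *: x + z) = a *: pi g x + pi g z.
Proof. by case: pi_rep => [H _]; case: (H g). Qed.
Let pi1 y : pi one y = y. Proof. by case: pi_rep => _ []. Qed.
Let piM g h y : pi (mul g h) y = pi g (pi h y). Proof. by case: pi_rep => _ []. Qed.

Let piD g x z : pi g (x + z) = pi g x + pi g z.
Proof. by have := pi_lin g 1 x z; rewrite !scale1r. Qed.
Let pi0 g : pi g 0 = 0.
Proof.
have := piD g 0 0; rewrite addr0 => /(congr1 (fun z => z - pi g 0)).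
by rewrite subrr addrK.
Qed.
Let piZ g a x : pi g (a *: x) = a *: pi g x.
Proof. by rewrite -[a *: x]addr0 pi_lin pi0 addr0. Qed.
Let piB g x z : pi g (x - z) = pi g x - pi g z.
Proof. by rewrite piD -scaleN1r piZ scaleN1r. Qed.

Local Notation gpow := (gpow mul one).

Lemma gpowSr x k : gpow x k.+1 = mul (gpow x k) x.
Proof.
elim: k => [|k IH]; first by rewrite /= mulg1 mul1g.
have -> : gpow x k.+2 = mul x (gpow x k.+1) by [].
by rewrite {1}IH mulA.
Qed.

Lemma gpow1 k : gpow one k = one.
Proof. by elim: k => //= k ->; rewrite mulg1. Qed.

Lemma gpow_continuous k : continuous (gpow^~ k).
Proof.
elim: k => [|k IH] g /=; first exact: cvg_cst.
apply: (@continuous2_cvg _ _ _ _ _ _ id (gpow^~ k) mul) => //; last exact: IH.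
exact: (mul_cont (g, gpow g k)).
Qed.

Lemma gpow_near_one {U : set G} k0 : nbhs one U ->
  exists2 B, nbhs one B & forall g, B g -> forall k, (k < k0)%N -> U (gpow g k).
Proof.
move=> nU; elim: k0 => [|k0 [B nB BU]]; first by exists setT => //; exact: filterT.
have nUk0 : nbhs one [set g | U (gpow g k0)].
  by apply: gpow_continuous; rewrite /= gpow1.
exists (B `&` [set g | U (gpow g k0)]); first exact: filterI.
by move=> g [Bg Ug] k; rewrite ltnS leq_eqVlt => /orP[/eqP -> //|]; exact: BU.
Qed.

Lemma pi_gpow_sub g y n :
  pi (gpow g n) y - y = \sum_(k < n) pi (gpow g k) (pi g y - y).
Proof.
elim: n => [|n IH]; first by rewrite big_ord0 /= pi1 subrr.
by rewrite big_ord_recr /= -IH piB -piM -gpowSr [RHS]addrC addrA subrK.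
Qed.

Lemma pi_cvg {T} {F : set_system T} {FF : Filter F} {gs : T -> G} {zs : T -> Y} {g z} :
  gs @ F --> g -> zs @ F --> z -> (fun x => pi (gs x) (zs x)) @ F --> pi g z.
Proof. by move=> gg zz; apply: continuous2_cvg => //; exact: (pi_cont (g, z)). Qed.

Lemma one_param_cvg0 {X : R -> G} : one_param mul X -> X @ 0 --> one.
Proof.
move=> [Xc XD]; have X00 := XD 0 0; rewrite addr0 in X00.
have <- : X 0 = one.
  by have := congr1 (mul (inv (X 0))) X00; rewrite mulVg mulA mulVg mul1g.
exact: Xc.
Qed.

Lemma one_param_dcvg0 {X : R -> G} : one_param mul X -> X @ 0^' --> one.
Proof.
move=> oX A /(one_param_cvg0 oX); rewrite !nbhs_filterE /fmap /dnbhs /within /=.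
by apply: filterS => t At _.
Qed.

Lemma diff_quot_cvg {X : R -> G} {y} : has_gen pi X y -> diff_quot pi X y @ 0^' --> dpi pi X y.
Proof. exact: xgetPex. Qed.

Lemma diff_quot_mul_cvg {X1 X2 : R -> G} {y} : one_param mul X1 ->
  has_gen pi X1 y -> has_gen pi X2 y ->
  diff_quot pi (fun h => mul (X1 h) (X2 h)) y @ 0^' --> dpi pi X1 y + dpi pi X2 y.
Proof.
move=> oX1 gX1 gX2.
have -> : diff_quot pi (fun h => mul (X1 h) (X2 h)) y =
    (fun h => diff_quot pi X1 y h + pi (X1 h) (diff_quot pi X2 y h)).
  apply: funext => h; rewrite /diff_quot piZ piB -piM -scalerDr.
  by rewrite [in RHS]addrC [in RHS]addrA subrK.
apply: cvgD_top; first exact: diff_quot_cvg.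
rewrite -[X in _ --> X]pi1; apply: pi_cvg; last exact: diff_quot_cvg.
exact: one_param_dcvg0.
Qed.

Lemma lie_sum_gpow_near_one {X X1 X2 : R -> G} {U : set G} :
  one_param mul X -> one_param mul X1 -> one_param mul X2 ->
  lie_sum mul inv one X X1 X2 -> nbhs one U ->
  exists2 d : R, 0 < d & forall h k, 0 <= h -> k%:R * h < d ->
    U (gpow (mul (X1 h) (X2 h)) k).
Proof.
move=> oX oX1 oX2 XX12 nU.
have nU' : nbhs (mul one one) U by rewrite mul1g.
have [U2 nU2 [U1 nU1 U12]] := continuous2_nbhs (mul_cont (one, one)) nU'.
have [d2 d2p d2U2] := cvg0_ball (one_param_cvg0 oX) nU2.
have [k0 _ k0U1] := XX12 `[-1, 1]%classic (@segment_compact _ _ _) U1 nU1.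
have [B nB BU] := gpow_near_one k0 nU.
have X12_cvg : (fun h => mul (X1 h) (X2 h)) @ 0 --> one.
  rewrite -[X in _ --> X]mul1g; apply: continuous2_cvg.
  - exact: (mul_cont (one, one)).
  - exact: one_param_cvg0.
  - exact: one_param_cvg0.
have [d3 d3p d3B] := cvg0_ball X12_cvg nB.
exists (Num.min d2 (Num.min d3 1)); first by rewrite !lt_min d2p d3p ltr01.
move=> h [|k] h0; first by move=> _; exact: nbhs_singleton nU.
rewrite !lt_min => /and3P[kd2 kd3 k1].
have hkh : h <= k.+1%:R * h by rewrite ler_peMl // ler1n.
(* Powers below k0 are handled by continuity of g |-> g^k; from k0 on, write
   g^k = X(kh) (X(kh)^-1 g^k) and use the Lie-sum hypothesis on [-1, 1]. *)
have [kk0 | k0k] := ltnP k.+1 k0.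
  by apply: BU kk0; apply: d3B; rewrite ger0_norm //; exact: le_lt_trans hkh kd3.
set s := k.+1%:R * h.
have s0 : 0 <= s by rewrite mulr_ge0.
have -> : h = s / k.+1%:R by rewrite /s mulrAC mulfV ?mul1r // pnatr_eq0.
rewrite -(mulKg (X s) (gpow _ _)); apply: U12.
  by apply: d2U2; rewrite ger0_norm.
apply: k0U1 k0k _ _; rewrite /= in_itv /= (le_trans (lerN10 _) s0).
exact: ltW.
Qed.

Lemma pi_diff_gpow_mean x g y v {t : R} {n} : t != 0 -> (0 < n)%N ->
  t^-1 *: (pi x y - y) = v + (t^-1 *: (pi x y - pi (gpow g n) y) +
    n%:R^-1 *: \sum_(k < n) (pi (gpow g k) ((t / n%:R)^-1 *: (pi g y - y)) - v)).
Proof.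
move=> t0 n0.
have -> : pi x y - y = (pi x y - pi (gpow g n) y) + (pi (gpow g n) y - y).
  by rewrite addrA subrK.
rewrite scalerDr addrCA; congr (_ + _).
rewrite sumrB sumr_const card_ord [in RHS]scalerBr -[in RHS](@scaler_nat R Y).
rewrite [in RHS]scalerA mulVf ?pnatr_eq0 -?lt0n // scale1r addrCA subrr addr0.
rewrite pi_gpow_sub.
rewrite [in RHS](eq_bigr _ (fun k _ => piZ _ _ _)).
by rewrite -scaler_sumr scalerA invf_div mulrA mulVf ?mul1r // pnatr_eq0 -lt0n.
Qed.

Lemma pi_diff_near_one x y (t : R) {C : set Y} : nbhs 0 C ->
  nbhs one [set u | C (t^-1 *: (pi x y - pi x (pi u y)))].
Proof.
have : t^-1 *: (pi x y - pi x (pi u y)) @[u --> one] --> t^-1 *: (pi x y - pi x (pi one y)).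
  apply: cvgZ_top; first exact: cvg_cst.
  apply: cvgB_top; first exact: cvg_cst.
  by apply: pi_cvg; [exact: cvg_cst | apply: pi_cvg; [exact: cvg_id | exact: cvg_cst]].
by rewrite pi1 subrr scaler0 => Cu nC; exact: Cu.
Qed.

Lemma dpi_add (X X1 X2 : R -> G) y : hausdorff_space Y ->
  one_param mul X -> one_param mul X1 -> one_param mul X2 ->
  has_gen pi X y -> has_gen pi X1 y -> has_gen pi X2 y ->
  lie_sum mul inv one X X1 X2 ->
  dpi pi X y = dpi pi X1 y + dpi pi X2 y.
Proof.
move=> Yhaus oX oX1 oX2 gX gX1 gX2 XX12.
set v := dpi pi X1 y + dpi pi X2 y.
suff Xv : diff_quot pi X y @ 0^'+ --> v.
  have Xd : diff_quot pi X y @ 0^'+ --> dpi pi X y.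
    by apply: cvg_dnbhs_at_right; exact: diff_quot_cvg.
  exact: (cvg_unique Yhaus Xd Xv).
move=> W /nbhs_to0 /nbhs0_add_split [E nE EW].
have [C [nC cC CE]] := nbhs0_convex_sub nE.
have nCv : nbhs (pi one v) [set z | C (z - v)] by rewrite pi1; exact: nbhs_from0.
have [U nU [N nN UN]] := continuous2_nbhs (pi_cont (one, v)) nCv.
have [d1 d1p d1N] := dcvg0_ball (diff_quot_mul_cvg oX1 gX1 gX2) nN.
have [d dp dU] := lie_sum_gpow_near_one oX oX1 oX2 XX12 nU.
suff : \forall t \near 0^'+, W (diff_quot pi X y t) by [].
near=> t.
have t0 : 0 < t by near: t; exact: nbhs_right_gt.
have td1 : t < d1 by near: t; exact: nbhs_right_lt.
have td : t < d by near: t; exact: nbhs_right_lt.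
have [n [Xgn n0]] := filter_ex (filterI
  (XX12 [set t] (@compact_set1 _ t) _ (pi_diff_near_one (X t) y t nC)) (nbhs_infty_gt 0)).
pose h := t / n%:R; pose g := mul (X1 h) (X2 h).
have h0 : 0 < h by rewrite divr_gt0 ?ltr0n.
have nh : n%:R * h = t by rewrite mulrC divfK // pnatr_eq0 -lt0n.
rewrite /diff_quot (pi_diff_gpow_mean _ g _ v (lt0r_neq0 t0) n0) -/h.
apply: EW; apply: CE.
  by have := Xgn t erefl; rewrite /= -piM mulKg.
pose zk k := pi (gpow g k) (h^-1 *: (pi g y - y)) - v.
apply: (convex_set_mean cC n zk n0) => k kn; apply: UN.
  apply: dU; first exact: ltW.
  by rewrite (lt_trans _ td) // -nh ltr_pM2r // ltr_nat.
apply: d1N; first exact: lt0r_neq0.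
rewrite gtr0_norm // (le_lt_trans _ td1) // -nh.
by apply: ler_peMl; [exact: ltW | rewrite ler1n].
Unshelve. all: by end_near.
Qed.

Lemma dpi_continuous (L : topologicalLmodType R) (iota : L -> R -> G) y :
  hausdorff_space Y ->
  (forall X : R -> G, one_param mul X <-> exists a : L, iota a = X) ->
  baire_space L ->
  continuous (iota : L -> {compact-open, R -> G}) ->
  (forall a b : L, lie_sum mul inv one (iota (a + b)) (iota a) (iota b)) ->
  D1 mul pi y -> continuous (fun a : L => dpi pi (iota a) y).
Proof.
move=> Yhaus iotaP bL iota_cont iotaD Dy.
have iota_op a : one_param mul (iota a) by apply/iotaP; exists a.
have iota_gen a : has_gen pi (iota a) y by exact: Dy.
apply: (@baire_additive_limit_continuous R Y L _
  (fun m a => diff_quot pi (iota a) y m.+1%:R^-1)) => //.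
- move=> m a; apply: cvgZ_top; first exact: cvg_cst.
  apply: cvgB_top; last exact: cvg_cst.
  by apply: pi_cvg; [exact: compact_open_eval_continuous | exact: cvg_cst].
- by move=> a; apply: cvg_comp cvg_invnS_dnbhs0 (diff_quot_cvg (iota_gen a)).
- by move=> a b; apply: dpi_add.
Qed.

End representation.

(* Neither is metrizability of [Y] (the Baire
   argument only uses closed neighbourhoods of 0), nor injectivity of [iota] or its
   compatibility with scalars. *)
Theorem theorem3p5 (R : realType) (G : topologicalType) (mul : G -> G -> G)
  (inv : G -> G) (one : G) (Y : tvsType R) (pi : G -> Y -> Y) :
  topological_group mul inv one ->
  hausdorff_space Y ->
  is_representation mul one pi ->
  continuous (fun p : G * Y => pi p.1 p.2) ->
  (exists V : set G, nbhs one V /\ equicontinuous_ops V pi) ->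
  D1 mul pi = D1lin mul inv one pi /\
  (forall (L : topologicalLmodType R) (iota : L -> R -> G),
     injective iota ->
     (forall X : R -> G, one_param mul X <-> exists a : L, iota a = X) ->
     baire_space L ->
     continuous (iota : L -> {compact-open, R -> G}) ->
     (forall a b : L, lie_sum mul inv one (iota (a + b)) (iota a) (iota b)) ->
     (forall (t : R) (a : L), iota (t *: a) = (fun s : R => iota a (t * s))) ->
     metrizable_space R Y ->
     D1 mul pi = D1cont mul pi iota).
Proof.
move=> Gtop Yhaus pi_rep pi_cont _; split.
  apply/seteqP; split=> y; last by case.
  move=> Dy; split=> // X X1 X2 oX oX1 oX2 XX12.
  by apply: (dpi_add Gtop pi_rep pi_cont) => //; exact: Dy.
move=> L iota _ iotaP bL iota_cont iotaD _ _.
apply/seteqP; split=> y; last by case.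
by move=> Dy; split=> //; exact: (dpi_continuous Gtop pi_rep pi_cont).
Qed.
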